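(* Let $f\in\mathcal{E}$ have infinite order and suppose $d(f^n)$ is bounded independently of $n$. Then there exists $N\in\mathbb{N}$ such that $d(f^{nN})$ is the same for all $n\in\mathbb{N}$.
   Context: Identify $\mathbb{T}^1=\mathbb{R}/\mathbb{Z}$ with $[0,1)$. An interval exchange transformation is a bijection of $\mathbb{T}^1$ that is a translation on each piece of some partition of $[0,1)$ into finitely many half-open intervals $[a,b)$; $\mathcal{E}$ is the group of these. $d(g)$ is the number of points at which $g$ is discontinuous as a map of the circle $\mathbb{T}^1$ with its standard topology. *)

From Stdlib Require Import Reals Lra List.
Open Scope R_scope.

(* The circle T^1 = R/Z is represented by [0,1); x mod 1 is frac_part. *)
Definition mod1 (x : R) : R := frac_part x.

Definition in01 (x : R) : Prop := 0 <= x < 1.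

Definition cdist (a b : R) : R :=
  Rmin (mod1 (a - b)) (1 - mod1 (a - b)).

(* A partition 0 = a_0 < a_1 < ... < a_k = 1 of [0,1), given as the list of
   breakpoints [a_0; ...; a_k], together with translation amounts t_i. *)
Fixpoint strictly_increasing (l : list R) : Prop :=
  match l with
  | a :: ((b :: _) as l') => a < b /\ strictly_increasing l'
  | _ => True
  end.

Definition piecewise_translation (g : R -> R) (pts ts : list R) : Prop :=
  length pts = S (length ts) /\
  hd 0 pts = 0 /\ last pts 0 = 1 /\ strictly_increasing pts /\
  forall i x, (i < length ts)%nat ->
    nth i pts 0 <= x < nth (S i) pts 0 ->
    g x = mod1 (x + nth i ts 0).

Definition bij01 (g : R -> R) : Prop :=
  (forall x, in01 x -> in01 (g x)) /\
  (forall x y, in01 x -> in01 y -> g x = g y -> x = y) /\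
  (forall y, in01 y -> exists x, in01 x /\ g x = y).

(* The group E of interval exchange transformations (only the values on
   [0,1) are relevant). *)
Definition IET (g : R -> R) : Prop :=
  bij01 g /\ exists pts ts, piecewise_translation g pts ts.

Definition iter (n : nat) (g : R -> R) : R -> R := Nat.iter n g.

Definition circle_continuous_at (g : R -> R) (x : R) : Prop :=
  forall eps, 0 < eps -> exists delta, 0 < delta /\
    forall y, in01 y -> cdist x y < delta -> cdist (g x) (g y) < eps.

Definition disc_count (g : R -> R) (n : nat) : Prop :=
  exists l : list R, NoDup l /\ length l = n /\
    forall x, In x l <-> (in01 x /\ ~ circle_continuous_at g x).

Definition infinite_order (f : R -> R) : Prop :=
  forall n : nat, (1 <= n)%nat -> exists x, in01 x /\ iter n f x <> x.

(* Let [tau] send each point to the left limit of [f] there. Then [f^n] is continuous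
   at [x] iff [f^n x = tau^n x], so the discontinuity set [A_n] of [f^n] is where the
   [f]- and [tau]-orbits of [x] disagree at time [n]. If the [f]-orbit of [x] first
   meets a discontinuity point [e] of [f] at time [k], then [x] is in [A_n] iff [e] is
   in [A_(n-k)]. Each profile [n |-> (e in A_n)] is eventually periodic: once the two
   orbits of [e] rejoin, they agree up to the next discontinuity point, and there are
   finitely many of those. If the backward orbit of [e] never meets another
   discontinuity point, the bound on [d(f^n)] forces the profile of [e] to vanish
   eventually; otherwise [k] is bounded. For [N] a large multiple of a common period,
   moving the points of the first kind [(n-1)N] steps back along their orbits and
   fixing the others is then a bijection from [A_N] onto [A_(nN)]. *)

From Stdlib Require Import Reals Lra Lia List Wf_nat Classical ClassicalEpsilon.
Local Open Scope nat_scope.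

(** * Eventual periodicity and finite counting *)

Lemma least_witness (P : nat -> Prop) :
  (exists n, P n) -> exists n, P n /\ forall m, P m -> n <= m.
Proof.
  intros Hex.
  destruct (dec_inh_nat_subset_has_unique_least_element P (fun n => classic (P n)) Hex)
    as [n [[Pn Hmin] _]].
  exists n. split; assumption.
Qed.

Lemma serial_transitive_loop {X : Type} (U : X -> Prop) (R : X -> X -> Prop) (L : list X) :
  (forall x, U x -> In x L) ->
  (forall x, U x -> exists y, U y /\ R x y) ->
  (forall x y z, R x y -> R y z -> R x z) ->
  forall x, U x -> exists y, U y /\ R y y.
Proof.
  revert U. induction L as [| a L IH]; intros U HUL Hser Htrans x Hx.
  - destruct (HUL x Hx).
  - destruct (classic (U a)) as [Ha | Ha].
    + destruct (classic (R a a)) as [Haa | Haa]; [exists a; auto |].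
      destruct (Hser a Ha) as [y [Hy Hay]].
      assert (Hloop : exists z, (U z /\ R a z) /\ R z z).
      { refine (IH (fun z => U z /\ R a z) _ _ Htrans y (conj Hy Hay)).
        - intros z [Hz Haz]. destruct (HUL z Hz) as [<- | HzL]; [contradiction | exact HzL].
        - intros z [Hz Haz]. destruct (Hser z Hz) as [w [Hw Hzw]].
          exists w. split; [split; [exact Hw | exact (Htrans _ _ _ Haz Hzw)] | exact Hzw]. }
      destruct Hloop as [z [[Hz _] Hzz]]. exists z. split; assumption.
    + refine (IH U _ Hser Htrans x Hx).
      intros z Hz. destruct (HUL z Hz) as [<- | HzL]; [contradiction | exact HzL].
Qed.

Lemma iter_preserves {X : Type} (P : X -> Prop) (g : X -> X) n x :
  (forall u, P u -> P (g u)) -> P x -> P (Nat.iter n g x).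
Proof. intros Hg Hx. induction n; simpl; auto. Qed.

Definition eventually_periodic (a : nat -> Prop) : Prop :=
  exists K p, 1 <= p /\ forall k, K <= k -> (a (k + p) <-> a k).

Definition shifted (a b : nat -> Prop) (w : nat) : Prop := forall k, a (k + w) <-> b k.

Lemma shifted_trans a b c v w : shifted a b v -> shifted b c w -> shifted a c (v + w).
Proof.
  unfold shifted. intros Hab Hbc k. replace (k + (v + w)) with ((k + w) + v) by lia.
  rewrite Hab. apply Hbc.
Qed.

Lemma eventually_periodic_shifted a b w :
  shifted a b w -> eventually_periodic b -> eventually_periodic a.
Proof.
  unfold shifted. intros Hab [K [p [Hp Hb]]]. exists (K + w), p. split; [exact Hp |].
  intros k Hk. replace k with ((k - w) + w) by lia.
  replace ((k - w) + w + p) with ((k - w + p) + w) by lia.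
  rewrite !Hab. apply Hb. lia.
Qed.

Lemma periodic_multiple (a : nat -> Prop) K p :
  (forall k, K <= k -> (a (k + p) <-> a k)) ->
  forall j k, K <= k -> (a (k + j * p) <-> a k).
Proof.
  intros Hper j. induction j as [| j IH]; intros k Hk.
  - rewrite Nat.add_0_r. reflexivity.
  - replace (k + S j * p) with ((k + j * p) + p) by lia.
    rewrite Hper by lia. apply IH, Hk.
Qed.

Lemma common_eventual_period {X : Type} (Q : X -> Prop) (a : X -> nat -> Prop) (L : list X) :
  (forall e, In e L -> Q e -> eventually_periodic (a e)) ->
  exists K p, 1 <= p /\ forall e, In e L -> Q e ->
    forall j k, K <= k -> (a e (k + j * p) <-> a e k).
Proof.
  induction L as [| e0 L IH]; intros Hper.
  - exists 0, 1. split; [lia | intros e []].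
  - destruct IH as [K [p [Hp HL]]]; [intros e He; apply Hper; right; exact He |].
    destruct (classic (Q e0)) as [HQ | HQ].
    + destruct (Hper e0 (or_introl eq_refl) HQ) as [K0 [p0 [Hp0 H0]]].
      exists (Nat.max K K0), (p0 * p). split; [nia |].
      intros e [<- | He] HQe j k Hk.
      * replace (j * (p0 * p)) with (j * p * p0) by ring.
        apply (periodic_multiple _ K0 p0 H0). lia.
      * replace (j * (p0 * p)) with (j * p0 * p) by ring.
        apply HL; [exact He | exact HQe | lia].
    + exists K, p. split; [exact Hp |].
      intros e [<- | He] HQe; [contradiction | exact (HL e He HQe)].
Qed.

Lemma uniform_bound {X : Type} (P : X -> nat -> Prop) (L : list X) :
  (forall e m n, P e m -> m <= n -> P e n) ->
  (forall e, In e L -> exists n, P e n) ->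
  exists N, forall e, In e L -> P e N.
Proof.
  intros Hmono. induction L as [| e0 L IH]; intros Hex.
  - exists 0. intros e [].
  - destruct IH as [N HN]; [intros e He; apply Hex; right; exact He |].
    destruct (Hex e0 (or_introl eq_refl)) as [N0 H0].
    exists (Nat.max N N0). intros e [<- | He].
    + apply (Hmono _ N0); [exact H0 | lia].
    + apply (Hmono _ N); [exact (HN e He) | lia].
Qed.

Lemma nodup_map_injective {X Y : Type} (g : X -> Y) (l : list X) :
  NoDup l -> (forall x y, In x l -> In y l -> g x = g y -> x = y) -> NoDup (map g l).
Proof.
  induction l as [| a l IH]; intros Hnd Hinj; simpl; [constructor |].
  inversion Hnd as [| ? ? Ha Hl]; subst. constructor.
  - intros Hin. apply in_map_iff in Hin. destruct Hin as [b [Hb HbL]].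
    apply Ha. rewrite <- (Hinj b a); simpl; auto.
  - apply IH; [exact Hl |]. intros x y Hx Hy. apply Hinj; simpl; auto.
Qed.

Definition list_counts {X : Type} (P : X -> Prop) (m : nat) : Prop :=
  exists l, NoDup l /\ length l = m /\ forall x, In x l <-> P x.

Definition bijective_on {X : Type} (P Q : X -> Prop) (phi : X -> X) : Prop :=
  (forall x, P x -> Q (phi x)) /\
  (forall x y, P x -> P y -> phi x = phi y -> x = y) /\
  (forall y, Q y -> exists x, P x /\ phi x = y).

Lemma list_counts_bijective {X : Type} (P Q : X -> Prop) phi m :
  bijective_on P Q phi -> list_counts P m -> list_counts Q m.
Proof.
  intros [Hmaps [Hinj Honto]] [l [Hnd [Hlen Hl]]].
  exists (map phi l). split; [| split].
  - apply nodup_map_injective; [exact Hnd |]. intros x y Hx Hy. apply Hinj; apply Hl; assumption.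
  - rewrite length_map. exact Hlen.
  - intros y. rewrite in_map_iff. split.
    + intros [x [<- Hx]]. apply Hmaps, Hl, Hx.
    + intros Hy. destruct (Honto y Hy) as [x [Hx <-]].
      exists x. split; [reflexivity | apply Hl, Hx].
Qed.

(** * Disagreement sets of two orbits *)

Section Disagreement.

(* Below, [s] is an interval exchange and [t] its map of left limits, so that
   [disagree n] is the discontinuity set of [s^n]. *)
Context {X : Type}.
Variables (D : X -> Prop) (s t : X -> X) (L : list X).
Hypothesis s_D : forall x, D x -> D (s x).
Hypothesis s_inj : forall x y, D x -> D y -> s x = s y -> x = y.
Hypothesis s_onto : forall y, D y -> exists x, D x /\ s x = y.

Definition break (u : X) : Prop := D u /\ s u <> t u.

Hypothesis breaks_listed : forall u, break u -> In u L.

Definition disagree (n : nat) (x : X) : Prop := D x /\ Nat.iter n s x <> Nat.iter n t x.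

Definition profile (e : X) : nat -> Prop := fun k => disagree k e.

Definition sinv (y : X) : X := epsilon (inhabits y) (fun x => D x /\ s x = y).

Lemma sinv_spec y : D y -> D (sinv y) /\ s (sinv y) = y.
Proof. intros Hy. apply (epsilon_spec (inhabits y) (fun x => D x /\ s x = y)), s_onto, Hy. Qed.

Lemma sinv_s x : D x -> sinv (s x) = x.
Proof.
  intros Hx. destruct (sinv_spec (s x) (s_D x Hx)) as [Hd Hs].
  apply s_inj; assumption.
Qed.

Lemma iter_s_D n x : D x -> D (Nat.iter n s x).
Proof. apply iter_preserves, s_D. Qed.

Lemma iter_sinv_D n y : D y -> D (Nat.iter n sinv y).
Proof. apply iter_preserves. intros u Hu. apply (sinv_spec u Hu). Qed.

Lemma iter_s_sinv k y : D y -> Nat.iter k s (Nat.iter k sinv y) = y.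
Proof.
  intros Hy. induction k as [| k IH]; [reflexivity |].
  rewrite (Nat.iter_succ_r k _ s), (Nat.iter_succ k _ sinv).
  rewrite (proj2 (sinv_spec _ (iter_sinv_D k y Hy))). exact IH.
Qed.

Lemma iter_sinv_s k x : D x -> Nat.iter k sinv (Nat.iter k s x) = x.
Proof.
  intros Hx. induction k as [| k IH]; [reflexivity |].
  rewrite (Nat.iter_succ k _ s), Nat.iter_succ_r, sinv_s by exact (iter_s_D k x Hx).
  exact IH.
Qed.

Lemma iter_s_sinv_le i k y : i <= k -> D y ->
  Nat.iter i s (Nat.iter k sinv y) = Nat.iter (k - i) sinv y.
Proof.
  intros Hik Hy.
  assert (Hsplit : Nat.iter k sinv y = Nat.iter i sinv (Nat.iter (k - i) sinv y)).
  { rewrite <- Nat.iter_add. f_equal. lia. }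
  rewrite Hsplit. apply iter_s_sinv, iter_sinv_D, Hy.
Qed.

Lemma agree_until_break x k : D x ->
  (forall i, i < k -> ~ break (Nat.iter i s x)) -> Nat.iter k s x = Nat.iter k t x.
Proof.
  intros Hx Hnb. induction k as [| k IH]; [reflexivity |].
  rewrite !Nat.iter_succ, <- IH by (intros i Hi; apply Hnb; lia).
  apply NNPP. intros Hne. apply (Hnb k); [lia | split; [apply iter_s_D, Hx | exact Hne]].
Qed.

Definition first_break (x : X) (k : nat) (e : X) : Prop :=
  D x /\ Nat.iter k s x = e /\ break e /\ forall i, i < k -> ~ break (Nat.iter i s x).

Definition backward_free (e : X) : Prop :=
  forall i, 1 <= i -> ~ break (Nat.iter i sinv e).

Lemma first_break_unique x k e k' e' :
  first_break x k e -> first_break x k' e' -> k = k' /\ e = e'.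
Proof.
  intros [_ [Hk [He Hbefore]]] [_ [Hk' [He' Hbefore']]].
  assert (k = k') as <-.
  { destruct (Nat.lt_total k k') as [Hlt | [Heq | Hlt]]; [| exact Heq |]; exfalso.
    - apply (Hbefore' k Hlt). rewrite Hk. exact He.
    - apply (Hbefore k' Hlt). rewrite Hk'. exact He'. }
  split; congruence.
Qed.

Lemma first_break_exists n x : disagree n x -> exists k e, k < n /\ first_break x k e.
Proof.
  intros [Hx Hne].
  destruct (classic (exists i, i < n /\ break (Nat.iter i s x))) as [Hex | Hnone].
  - destruct (least_witness _ Hex) as [k [[Hk He] Hmin]].
    exists k, (Nat.iter k s x). split; [exact Hk |].
    split; [exact Hx | split; [reflexivity | split; [exact He |]]].
    intros i Hi Hb. specialize (Hmin i (conj (Nat.lt_trans _ _ _ Hi Hk) Hb)). lia.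
  - exfalso. apply Hne, agree_until_break; [exact Hx |].
    intros i Hi Hb. apply Hnone. exists i. split; assumption.
Qed.

Lemma disagree_first_break x k e n : first_break x k e -> k <= n ->
  (disagree n x <-> disagree (n - k) e).
Proof.
  intros [Hx [Hk [He Hbefore]]] Hkn. unfold disagree.
  assert (Hs : Nat.iter n s x = Nat.iter (n - k) s e).
  { rewrite <- Hk, <- Nat.iter_add. f_equal. lia. }
  assert (Ht : Nat.iter n t x = Nat.iter (n - k) t e).
  { rewrite <- Hk, (agree_until_break x k Hx Hbefore), <- Nat.iter_add. f_equal. lia. }
  rewrite Hs, Ht.
  split; intros [_ Hne]; split; [exact (proj1 He) | exact Hne | exact Hx | exact Hne].
Qed.

Lemma first_break_origin x k e : first_break x k e -> x = Nat.iter k sinv e.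
Proof. intros [Hx [<- _]]. symmetry. apply iter_sinv_s, Hx. Qed.

Lemma first_break_before x k e i : first_break x k e ->
  1 <= i -> break (Nat.iter i sinv e) -> k < i.
Proof.
  intros Hfb Hi Hb. apply Nat.nlt_ge. intros Hik. apply Nat.lt_succ_r in Hik.
  destruct Hfb as [Hx [Hk [He Hbefore]]] eqn:Hfb'.
  apply (Hbefore (k - i)); [lia |].
  rewrite (first_break_origin x k e Hfb), iter_s_sinv_le by (lia || exact (proj1 He)).
  replace (k - (k - i)) with i by lia. exact Hb.
Qed.

Lemma first_break_backward e k : break e ->
  (forall j, 1 <= j <= k -> ~ break (Nat.iter j sinv e)) ->
  first_break (Nat.iter k sinv e) k e.
Proof.
  intros He Hrun. split; [| split; [| split]].
  - apply iter_sinv_D, (proj1 He).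
  - apply iter_s_sinv, (proj1 He).
  - exact He.
  - intros i Hi. rewrite iter_s_sinv_le by (lia || exact (proj1 He)). apply Hrun. lia.
Qed.

Lemma first_break_forward x k e m : first_break x k e -> m <= k ->
  first_break (Nat.iter m s x) (k - m) e.
Proof.
  intros [Hx [Hk [He Hbefore]]] Hm. split; [| split; [| split]].
  - apply iter_s_D, Hx.
  - rewrite <- Nat.iter_add. replace (k - m + m) with k by lia. exact Hk.
  - exact He.
  - intros i Hi. rewrite <- Nat.iter_add. apply Hbefore. lia.
Qed.

Lemma first_break_free_shift x k e m : first_break x k e -> backward_free e ->
  first_break (Nat.iter m sinv x) (m + k) e.
Proof.
  intros Hfb Hfree. rewrite (first_break_origin x k e Hfb), <- Nat.iter_add.
  apply first_break_backward; [exact (proj1 (proj2 (proj2 Hfb))) |].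
  intros j Hj. apply Hfree. lia.
Qed.

(* Once [s^z e = t^z e], the two orbits run together up to the next break point [e'],
   so the profile of [e] is that of [e'], delayed. *)
Lemma profile_step e : D e ->
  eventually_periodic (profile e) \/
  exists e' w, break e' /\ 1 <= w /\ shifted (profile e) (profile e') w.
Proof.
  intros He. unfold profile, disagree.
  destruct (classic (exists z, 1 <= z /\ Nat.iter z s e = Nat.iter z t e))
    as [[z [Hz Hagree]] | Hnever].
  2: { left. exists 1, 1. split; [lia |]. intros k Hk.
       split; intros _; (split; [exact He |]); intros Heq; apply Hnever;
         [exists k | exists (k + 1)]; split; (lia || exact Heq). }
  set (y := Nat.iter z s e).
  assert (Hy : D y) by apply iter_s_D, He.
  destruct (classic (exists h, break (Nat.iter h s y))) as [Hex | Hnone].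
  - right. destruct (least_witness _ Hex) as [h [Hh Hmin]].
    exists (Nat.iter h s y), (h + z). split; [exact Hh | split; [lia |]].
    intros k. rewrite !Nat.iter_add. fold y. rewrite <- Hagree. fold y.
    rewrite <- (agree_until_break y h Hy) by (intros i Hi Hb; specialize (Hmin i Hb); lia).
    split; intros [_ Hne]; split; [exact (proj1 Hh) | exact Hne | exact He | exact Hne].
  - left. exists z, 1. split; [lia |].
    assert (Hzero : forall m, z <= m -> Nat.iter m s e = Nat.iter m t e).
    { intros m Hm. replace m with ((m - z) + z) by lia.
      rewrite !Nat.iter_add. fold y. rewrite <- Hagree. fold y.
      apply agree_until_break; [exact Hy |]. intros i _ Hb. apply Hnone. exists i. exact Hb. }
    intros k Hk. rewrite !Hzero by lia. tauto.
Qed.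

Lemma break_profile_periodic e : break e -> eventually_periodic (profile e).
Proof.
  intros He. apply NNPP. intros Hnper.
  set (U := fun x => break x /\ ~ eventually_periodic (profile x)).
  set (R := fun x y => exists w, 1 <= w /\ shifted (profile x) (profile y) w).
  destruct (serial_transitive_loop U R L) with (x := e) as [y [[_ Hy] [w [Hw Hyy]]]].
  - intros x [Hx _]. apply breaks_listed, Hx.
  - intros x [Hx Hxper]. destruct (profile_step x (proj1 Hx)) as [Hper | [x' [w [Hx' [Hw Hsh]]]]].
    + contradiction.
    + exists x'. split; [split; [exact Hx' |] | exists w; split; assumption].
      intros Hper. apply Hxper. exact (eventually_periodic_shifted _ _ _ Hsh Hper).
  - intros x y z [v [Hv Hxy]] [w [Hw Hyz]]. exists (v + w).
    split; [lia | exact (shifted_trans _ _ _ _ _ Hxy Hyz)].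
  - split; assumption.
  - apply Hy. exists 0, w. split; [exact Hw | intros k _; apply Hyy].
Qed.

Lemma break_profiles_common_period : exists K p, 1 <= p /\ forall e, break e ->
  forall j k, K <= k -> (disagree (k + j * p) e <-> disagree k e).
Proof.
  destruct (common_eventual_period break profile L) as [K [p [Hp Hperiod]]].
  - intros e _ He. apply break_profile_periodic, He.
  - exists K, p. split; [exact Hp |]. intros e He. exact (Hperiod e (breaks_listed e He) He).
Qed.

Lemma backward_runs_bounded : exists Lm, forall e, break e -> ~ backward_free e ->
  exists i, 1 <= i <= Lm /\ break (Nat.iter i sinv e).
Proof.
  destruct (uniform_bound (fun e Lm => break e -> ~ backward_free e ->
              exists i, 1 <= i <= Lm /\ break (Nat.iter i sinv e)) L) as [Lm HLm].
  - intros e m m' Hm Hmm' He Hnfree. destruct (Hm He Hnfree) as [i [Hi Hb]].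
    exists i. split; [lia | exact Hb].
  - intros e _. destruct (classic (exists i, 1 <= i /\ break (Nat.iter i sinv e)))
      as [[i [Hi Hb]] | Hnone].
    + exists i. intros _ _. exists i. split; [lia | exact Hb].
    + exists 0. intros _ Hnfree. exfalso. apply Hnfree.
      intros i Hi Hb. apply Hnone. exists i. split; assumption.
  - exists Lm. intros e He. exact (HLm e (breaks_listed e He) He).
Qed.

Variable B : nat.
Hypothesis disagree_bounded : forall n, exists m, list_counts (disagree n) m /\ m <= B.

(* Otherwise the [B + 1] points [sinv^(j p) e], [j <= B], would be distinct points
   of a single disagreement set. *)
Lemma free_profile_vanishes e K p : 1 <= p -> break e -> backward_free e ->
  (forall j k, K <= k -> (disagree (k + j * p) e <-> disagree k e)) ->
  forall k, K <= k -> ~ disagree k e.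
Proof.
  intros Hp He Hfree Hper k0 Hk0 Hdis.
  set (n := k0 + B * p).
  set (pt := fun j => Nat.iter (j * p) sinv e).
  assert (Hpt : forall j, first_break (pt j) (j * p) e).
  { intros j. apply first_break_backward; [exact He |]. intros i Hi. apply Hfree. lia. }
  destruct (disagree_bounded n) as [m [[l [Hnd [Hlen Hl]]] Hm]].
  assert (Hincl : incl (map pt (seq 0 (S B))) l).
  { intros x Hx. apply in_map_iff in Hx. destruct Hx as [j [<- Hj]]. apply in_seq in Hj.
    apply Hl. rewrite (disagree_first_break _ _ _ n (Hpt j)) by nia.
    replace (n - j * p) with (k0 + (B - j) * p) by nia.
    apply Hper; assumption. }
  assert (Hnd' : NoDup (map pt (seq 0 (S B)))).
  { apply nodup_map_injective; [apply seq_NoDup |]. intros i j Hi Hj Hij.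
    assert (Hfbj : first_break (pt i) (j * p) e) by (rewrite Hij; apply Hpt).
    destruct (first_break_unique _ _ _ _ _ (Hpt i) Hfbj) as [Hijp _]. nia. }
  pose proof (NoDup_incl_length Hnd' Hincl) as Hcard.
  rewrite length_map, length_seq in Hcard. lia.
Qed.

Section Transfer.

Variables (K p Lm q n : nat).
Hypothesis period : forall e, break e ->
  forall j k, K <= k -> (disagree (k + j * p) e <-> disagree k e).
Hypothesis free_vanishes : forall e, break e -> backward_free e ->
  forall k, K <= k -> ~ disagree k e.
Hypothesis run_bounded : forall e, break e -> ~ backward_free e ->
  exists i, 1 <= i <= Lm /\ break (Nat.iter i sinv e).
Hypothesis N_large : K + Lm <= q * p.
Hypothesis n_pos : 1 <= n.

Let N := q * p.
Let delay := (n - 1) * N.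

Definition free_orbit (x : X) : Prop := exists k e, first_break x k e /\ backward_free e.

(* Moving a point [delay] steps back along its orbit adds [delay] to its first-break
   time; this is done exactly when that time is unbounded, i.e. when the first break
   point is backward free. *)
Definition transfer (x : X) : X :=
  if excluded_middle_informative (free_orbit x) then Nat.iter delay sinv x else x.

Lemma transfer_free x k e : first_break x k e -> backward_free e ->
  transfer x = Nat.iter delay sinv x.
Proof.
  intros Hfb Hfree. unfold transfer.
  destruct excluded_middle_informative as [_ | Hno]; [reflexivity |].
  exfalso. apply Hno. exists k, e. split; assumption.
Qed.

Lemma transfer_bounded x k e : first_break x k e -> ~ backward_free e -> transfer x = x.
Proof.
  intros Hfb Hnfree. unfold transfer.
  destruct excluded_middle_informative as [[k' [e' [Hfb' Hfree']]] | _]; [| reflexivity].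
  destruct (first_break_unique _ _ _ _ _ Hfb Hfb') as [_ <-]. contradiction.
Qed.

Lemma bounded_run_time x k e : first_break x k e -> ~ backward_free e -> k < Lm.
Proof.
  intros Hfb Hnfree.
  destruct (run_bounded e (proj1 (proj2 (proj2 Hfb))) Hnfree) as [i [Hi Hb]].
  pose proof (first_break_before x k e i Hfb (proj1 Hi) Hb). lia.
Qed.

Lemma disagree_bounded_run x k e : first_break x k e -> ~ backward_free e ->
  (disagree (n * N) x <-> disagree N x).
Proof.
  intros Hfb Hnfree. pose proof (bounded_run_time x k e Hfb Hnfree).
  unfold N in *. rewrite !(disagree_first_break x k e _ Hfb) by nia.
  replace (n * (q * p) - k) with ((q * p - k) + ((n - 1) * q) * p) by nia.
  apply period; [exact (proj1 (proj2 (proj2 Hfb))) | lia].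
Qed.

Lemma transfer_maps x : disagree N x -> disagree (n * N) (transfer x).
Proof.
  intros Hx. destruct (first_break_exists N x Hx) as [k [e [Hk Hfb]]].
  destruct (classic (backward_free e)) as [Hfree | Hnfree].
  - rewrite (transfer_free x k e Hfb Hfree).
    pose proof (first_break_free_shift x k e delay Hfb Hfree) as Hfb'.
    rewrite (disagree_first_break _ _ _ _ Hfb') by (unfold delay, N in *; nia).
    rewrite (disagree_first_break _ _ _ _ Hfb) in Hx by lia.
    replace (n * N - (delay + k)) with (N - k) by (unfold delay, N in *; nia).
    exact Hx.
  - rewrite (transfer_bounded x k e Hfb Hnfree).
    apply (disagree_bounded_run x k e Hfb Hnfree), Hx.
Qed.

Lemma transfer_injective x y : disagree N x -> disagree N y -> transfer x = transfer y -> x = y.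
Proof.
  intros Hx Hy Hxy.
  destruct (first_break_exists N x Hx) as [k [e [_ Hfbx]]].
  destruct (first_break_exists N y Hy) as [k' [e' [_ Hfby]]].
  assert (Hmixed : forall x y k e k' e', first_break x k e -> backward_free e ->
            first_break y k' e' -> ~ backward_free e' -> transfer x <> transfer y).
  { intros x1 y1 k1 e1 k1' e1' Hfb1 Hfree1 Hfb1' Hnfree1 Heq.
    rewrite (transfer_free _ _ _ Hfb1 Hfree1), (transfer_bounded _ _ _ Hfb1' Hnfree1) in Heq.
    pose proof (first_break_free_shift _ _ _ delay Hfb1 Hfree1) as Hshift. rewrite Heq in Hshift.
    destruct (first_break_unique _ _ _ _ _ Hshift Hfb1') as [_ <-]. contradiction. }
  destruct (classic (backward_free e)) as [Hfree | Hnfree];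
  destruct (classic (backward_free e')) as [Hfree' | Hnfree'].
  - rewrite (transfer_free _ _ _ Hfbx Hfree), (transfer_free _ _ _ Hfby Hfree') in Hxy.
    rewrite <- (iter_s_sinv delay x (proj1 Hx)), <- (iter_s_sinv delay y (proj1 Hy)), Hxy.
    reflexivity.
  - exfalso. exact (Hmixed _ _ _ _ _ _ Hfbx Hfree Hfby Hnfree' Hxy).
  - exfalso. exact (Hmixed _ _ _ _ _ _ Hfby Hfree' Hfbx Hnfree (eq_sym Hxy)).
  - rewrite (transfer_bounded _ _ _ Hfbx Hnfree), (transfer_bounded _ _ _ Hfby Hnfree') in Hxy.
    exact Hxy.
Qed.

Lemma transfer_onto y : disagree (n * N) y -> exists x, disagree N x /\ transfer x = y.
Proof.
  intros Hy. destruct (first_break_exists _ y Hy) as [k [e [Hk Hfb]]].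
  pose proof Hy as Hye. rewrite (disagree_first_break _ _ _ _ Hfb) in Hye by lia.
  destruct (classic (backward_free e)) as [Hfree | Hnfree].
  - assert (Hlate : delay <= k).
    { apply NNPP. intros Hearly.
      apply (free_vanishes e (proj1 (proj2 (proj2 Hfb))) Hfree (n * N - k));
        [unfold delay, N in *; nia | exact Hye]. }
    pose proof (first_break_forward y k e delay Hfb Hlate) as Hfbx.
    exists (Nat.iter delay s y). split.
    + rewrite (disagree_first_break _ _ _ _ Hfbx) by (unfold delay, N in *; nia).
      replace (N - (k - delay)) with (n * N - k) by (unfold delay, N in *; nia).
      exact Hye.
    + rewrite (transfer_free _ _ _ Hfbx Hfree). apply iter_sinv_s, (proj1 Hy).
  - exists y. split.
    + apply (disagree_bounded_run y k e Hfb Hnfree), Hy.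
    + exact (transfer_bounded y k e Hfb Hnfree).
Qed.

Lemma transfer_bijective : bijective_on (disagree N) (disagree (n * N)) transfer.
Proof.
  split; [exact transfer_maps | split; [exact transfer_injective | exact transfer_onto]].
Qed.

End Transfer.

Theorem disagree_eventually_equinumerous : exists N, 1 <= N /\
  forall n, 1 <= n -> exists phi, bijective_on (disagree N) (disagree (n * N)) phi.
Proof.
  destruct break_profiles_common_period as [K [p [Hp Hperiod]]].
  destruct backward_runs_bounded as [Lm HLm].
  exists ((K + Lm + 1) * p). split; [nia |]. intros n Hn.
  exists (transfer p (K + Lm + 1) n).
  apply (transfer_bijective K p Lm); [exact Hperiod | | exact HLm | nia | exact Hn].
  intros e He Hfree. exact (free_profile_vanishes e K p Hp He Hfree (Hperiod e He)).
Qed.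

End Disagreement.

Local Open Scope R_scope.

(** * Continuity on the circle via one-sided translations *)

Lemma mod1_range z : 0 <= mod1 z < 1.
Proof. unfold mod1. destruct (base_fp z); lra. Qed.

Lemma mod1_decomp z : exists k, z = mod1 z + IZR k.
Proof. exists (Int_part z). unfold mod1, frac_part. ring. Qed.

Lemma mod1_eq y z k : 0 <= y < 1 -> z = y + IZR k -> mod1 z = y.
Proof.
  intros Hy Hz. unfold mod1, frac_part, Int_part.
  assert (Hup : (k + 1)%Z = up z) by (apply tech_up; rewrite plus_IZR; simpl; lra).
  rewrite <- Hup. replace (k + 1 - 1)%Z with k by ring. lra.
Qed.

Lemma mod1_id y : in01 y -> mod1 y = y.
Proof. intros Hy. apply (mod1_eq y y 0); [exact Hy | simpl; ring]. Qed.

Lemma mod1_shift z1 z2 k : z1 = z2 + IZR k -> mod1 z1 = mod1 z2.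
Proof.
  intros Hz. destruct (mod1_decomp z2) as [j Hj].
  apply (mod1_eq _ _ (j + k)); [apply mod1_range | rewrite plus_IZR; lra].
Qed.

Lemma mod1_addl a b : mod1 (mod1 a + b) = mod1 (a + b).
Proof.
  destruct (mod1_decomp a) as [j Hj]. apply (mod1_shift _ _ (- j)).
  rewrite opp_IZR. lra.
Qed.

Lemma cdist_le_shift a b k : cdist a b <= Rabs (a - b - IZR k).
Proof.
  unfold cdist. destruct (mod1_decomp (a - b)) as [j Hj].
  pose proof (mod1_range (a - b)). set (m := mod1 (a - b)) in *.
  replace (a - b - IZR k) with (m + IZR (j - k)) by (rewrite minus_IZR; lra).
  destruct (Z.le_gt_cases 0 (j - k)) as [Hjk | Hjk].
  - apply IZR_le in Hjk. rewrite Rabs_right by lra.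
    apply Rle_trans with m; [apply Rmin_l | lra].
  - assert (IZR (j - k) <= -1) by (apply IZR_le; lia).
    rewrite Rabs_left by lra.
    apply Rle_trans with (1 - m); [apply Rmin_r | lra].
Qed.

Lemma cdist_attained a b : exists k, cdist a b = Rabs (a - b - IZR k).
Proof.
  unfold cdist. destruct (mod1_decomp (a - b)) as [j Hj].
  pose proof (mod1_range (a - b)). set (m := mod1 (a - b)) in *.
  destruct (Rle_dec m (1 - m)).
  - exists j. rewrite Rmin_left, Rabs_right; lra.
  - exists (j + 1)%Z. rewrite Rmin_right, plus_IZR, Rabs_left; simpl; lra.
Qed.

Lemma cdist_ge0 a b : 0 <= cdist a b.
Proof. destruct (cdist_attained a b) as [k ->]. apply Rabs_pos. Qed.

Lemma cdist_sym a b : cdist a b = cdist b a.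
Proof.
  assert (Hle : forall a b, cdist a b <= cdist b a).
  { intros x y. destruct (cdist_attained y x) as [k ->].
    eapply Rle_trans; [apply (cdist_le_shift x y (- k)) |].
    rewrite opp_IZR, <- Rabs_Ropp. right. f_equal. ring. }
  apply Rle_antisym; apply Hle.
Qed.

Lemma cdist_triangle a b c : cdist a c <= cdist a b + cdist b c.
Proof.
  destruct (cdist_attained a b) as [k1 ->]. destruct (cdist_attained b c) as [k2 ->].
  eapply Rle_trans; [apply (cdist_le_shift a c (k1 + k2)) |].
  rewrite plus_IZR.
  replace (a - c - (IZR k1 + IZR k2)) with ((a - b - IZR k1) + (b - c - IZR k2)) by ring.
  apply Rabs_triang.
Qed.

Lemma cdist_eq0 a b : in01 a -> in01 b -> cdist a b = 0 -> a = b.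
Proof.
  intros Ha Hb H0. destruct (cdist_attained a b) as [k Hk]. rewrite Hk in H0.
  assert (a - b - IZR k = 0) by (apply NNPP; intros Hne; apply Rabs_no_R0 in Hne; auto).
  rewrite <- (mod1_id a Ha). apply (mod1_eq b a k); [exact Hb | lra].
Qed.

Lemma cdist_mod1_add a h : cdist a (mod1 (a + h)) <= Rabs h.
Proof.
  destruct (mod1_decomp (a + h)) as [j Hj].
  eapply Rle_trans; [apply (cdist_le_shift _ _ j) |].
  rewrite <- Rabs_Ropp. right. f_equal. lra.
Qed.

Lemma cdist_lt_mod1_sub x y d : in01 y -> cdist x y < d ->
  exists h, Rabs h < d /\ y = mod1 (x - h).
Proof.
  intros Hy Hd. destruct (cdist_attained x y) as [k Hk].
  exists (x - y - IZR k). split; [lra |].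
  symmetry. apply (mod1_eq _ _ k); [exact Hy | ring].
Qed.

Definition right_translation (g : R -> R) (x : R) : Prop :=
  exists d, 0 < d /\ forall h, 0 <= h < d -> g (mod1 (x + h)) = mod1 (g x + h).

Definition left_translation (g : R -> R) (x v : R) : Prop :=
  exists d, 0 < d /\ forall h, 0 < h < d -> g (mod1 (x - h)) = mod1 (v - h).

Lemma jump_not_continuous g x v : in01 x -> in01 (g x) -> in01 v ->
  left_translation g x v -> v <> g x -> ~ circle_continuous_at g x.
Proof.
  intros Hx Hgx Hv [dl [Hdl Hleft]] Hjump Hcont.
  set (d := cdist (g x) v).
  assert (Hd : 0 < d).
  { destruct (cdist_ge0 (g x) v) as [| Hd0]; [assumption |].
    exfalso. apply Hjump. symmetry. apply cdist_eq0; auto. }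
  destruct (Hcont (d / 2)) as [de [Hde Hclose]]; [lra |].
  set (h := Rmin (Rmin de dl) d / 2).
  assert (Hh : 0 < h /\ h < de /\ h < dl /\ h <= d / 2).
  { unfold h. pose proof (Rmin_l (Rmin de dl) d). pose proof (Rmin_r (Rmin de dl) d).
    pose proof (Rmin_l de dl). pose proof (Rmin_r de dl).
    assert (0 < Rmin (Rmin de dl) d) by (apply Rmin_pos; [apply Rmin_pos |]; lra). lra. }
  assert (Hx_near : cdist x (mod1 (x - h)) < de).
  { pose proof (cdist_mod1_add x (- h)) as Hxh.
    rewrite Rabs_Ropp, Rabs_right in Hxh by lra. unfold Rminus. lra. }
  specialize (Hclose _ (mod1_range _) Hx_near). rewrite Hleft in Hclose by lra.
  pose proof (cdist_triangle (g x) (mod1 (v - h)) v) as Htri.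
  pose proof (cdist_mod1_add v (- h)) as Hvh.
  rewrite Rabs_Ropp, Rabs_right in Hvh by lra.
  rewrite (cdist_sym (mod1 (v - h)) v) in Htri. unfold Rminus in *. fold d in Htri. lra.
Qed.

Lemma translations_continuous g x :
  right_translation g x -> left_translation g x (g x) -> circle_continuous_at g x.
Proof.
  intros [dr [Hdr Hright]] [dl [Hdl Hleft]] eps Heps.
  exists (Rmin (Rmin dr dl) eps).
  pose proof (Rmin_l (Rmin dr dl) eps). pose proof (Rmin_r (Rmin dr dl) eps).
  pose proof (Rmin_l dr dl). pose proof (Rmin_r dr dl).
  split; [apply Rmin_pos; [apply Rmin_pos |]; lra |].
  intros y Hy Hxy. destruct (cdist_lt_mod1_sub x y _ Hy Hxy) as [h [Hh ->]].
  destruct (Rle_dec h 0) as [Hh0 | Hh0].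
  - rewrite Rabs_left1 in Hh by lra.
    replace (x - h) with (x + - h) by ring. rewrite Hright by lra.
    eapply Rle_lt_trans; [apply cdist_mod1_add | rewrite Rabs_right; lra].
  - rewrite Rabs_right in Hh by lra. rewrite Hleft by lra.
    eapply Rle_lt_trans; [apply cdist_mod1_add | rewrite Rabs_Ropp, Rabs_right; lra].
Qed.

Lemma continuous_iff_no_jump g x v : in01 x -> in01 (g x) -> in01 v ->
  right_translation g x -> left_translation g x v ->
  (circle_continuous_at g x <-> v = g x).
Proof.
  intros Hx Hgx Hv Hr Hl. split.
  - intros Hc. apply NNPP. intros Hj. exact (jump_not_continuous g x v Hx Hgx Hv Hl Hj Hc).
  - intros Hnojump. subst v. apply translations_continuous; assumption.
Qed.

(** * Interval exchanges and their iterates *)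

Lemma piece_closed_open l x : strictly_increasing l -> hd 0 l <= x < last l 0 ->
  exists i, (S i < length l)%nat /\ nth i l 0 <= x < nth (S i) l 0.
Proof.
  induction l as [| a [| b l'] IH]; simpl; intros Hl Hx; try lra.
  destruct Hl as [Hab Hl]. destruct (Rlt_dec x b).
  - exists 0%nat. simpl. split; [lia | lra].
  - destruct (IH Hl) as [i [Hi Hxi]]; [simpl; lra |].
    exists (S i). simpl in *. split; [lia | exact Hxi].
Qed.

Lemma piece_open_closed l x : strictly_increasing l -> hd 0 l < x <= last l 0 ->
  exists i, (S i < length l)%nat /\ nth i l 0 < x <= nth (S i) l 0.
Proof.
  induction l as [| a [| b l'] IH]; simpl; intros Hl Hx; try lra.
  destruct Hl as [Hab Hl]. destruct (Rle_dec x b).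
  - exists 0%nat. simpl. split; [lia | lra].
  - destruct (IH Hl) as [i [Hi Hxi]]; [simpl; lra |].
    exists (S i). simpl in *. split; [lia | exact Hxi].
Qed.

(* Seen from the left, the point 0 of the circle is the point 1. *)
Lemma left_representative u : in01 u -> exists u', 0 < u' <= 1 /\ (u' = u \/ u = 0) /\
  forall h, 0 < h < u' -> mod1 (u - h) = u' - h.
Proof.
  intros Hu. unfold in01 in Hu. destruct (Rlt_dec 0 u).
  - exists u. split; [lra | split; [left; reflexivity |]].
    intros h Hh. apply (mod1_eq _ _ 0); [lra | simpl; ring].
  - exists 1. split; [lra | split; [right; lra |]].
    intros h Hh. apply (mod1_eq _ _ (-1)); [lra | simpl; lra].
Qed.

Section PiecewiseTranslation.
Variables (f : R -> R) (pts ts : list R).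
Hypothesis Hf : piecewise_translation f pts ts.

Lemma piecewise_right_translation u : in01 u -> right_translation f u.
Proof.
  destruct Hf as [Hlen [Hhd [Hlast [Hinc Htr]]]]. intros Hu. unfold in01 in Hu.
  destruct (piece_closed_open pts u Hinc) as [i [Hi Hui]]; [rewrite Hhd, Hlast; lra |].
  exists (Rmin (nth (S i) pts 0 - u) (1 - u)). split; [apply Rmin_pos; lra |].
  intros h Hh. pose proof (Rmin_l (nth (S i) pts 0 - u) (1 - u)).
  pose proof (Rmin_r (nth (S i) pts 0 - u) (1 - u)).
  rewrite (mod1_id (u + h)) by (unfold in01; lra).
  rewrite (Htr i (u + h)), (Htr i u), mod1_addl by (lia || lra).
  f_equal. ring.
Qed.

Lemma piecewise_left_translation u : in01 u ->
  exists v, in01 v /\ left_translation f u v /\ (f u <> v -> In u pts).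
Proof.
  destruct Hf as [Hlen [Hhd [Hlast [Hinc Htr]]]]. intros Hu.
  destruct (left_representative u Hu) as [u' [Hu' [Hcase Hsub]]].
  destruct (piece_open_closed pts u' Hinc) as [i [Hi Hui]]; [rewrite Hhd, Hlast; lra |].
  exists (mod1 (u' + nth i ts 0)). split; [apply mod1_range | split].
  - exists (Rmin (u' - nth i pts 0) u'). split; [apply Rmin_pos; lra |].
    intros h Hh. pose proof (Rmin_l (u' - nth i pts 0) u').
    pose proof (Rmin_r (u' - nth i pts 0) u').
    rewrite Hsub, (Htr i (u' - h)) by (lia || lra).
    unfold Rminus. rewrite mod1_addl. f_equal. ring.
  - intros Hjump. destruct Hcase as [<- | ->].
    + destruct (Req_dec u' (nth (S i) pts 0)) as [-> | Hne]; [apply nth_In; lia |].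
      exfalso. apply Hjump. rewrite (Htr i u') by (lia || lra). reflexivity.
    + destruct pts; simpl in *; [lia | left; exact Hhd].
Qed.

Lemma piecewise_left_limit : exists tau : R -> R, forall u, in01 u ->
  in01 (tau u) /\ left_translation f u (tau u) /\ (f u <> tau u -> In u pts).
Proof.
  exists (fun u => epsilon (inhabits 0)
    (fun v => in01 v /\ left_translation f u v /\ (f u <> v -> In u pts))).
  intros u Hu. apply epsilon_spec, piecewise_left_translation, Hu.
Qed.

End PiecewiseTranslation.

Section Iterates.
Variables f tau : R -> R.
Hypothesis f_in01 : forall u, in01 u -> in01 (f u).
Hypothesis f_right : forall u, in01 u -> right_translation f u.
Hypothesis tau_left : forall u, in01 u -> in01 (tau u) /\ left_translation f u (tau u).

Lemma iter_right_translation n x : in01 x -> right_translation (iter n f) x.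
Proof.
  intros Hx. induction n as [| n [d [Hd IH]]].
  - exists 1. split; [lra | reflexivity].
  - assert (Hfn : in01 (iter n f x)) by exact (iter_preserves in01 f n x f_in01 Hx).
    destruct (f_right _ Hfn) as [e [He Hstep]].
    exists (Rmin d e). split; [apply Rmin_pos; lra |].
    intros h Hh. pose proof (Rmin_l d e). pose proof (Rmin_r d e).
    change (f (iter n f (mod1 (x + h))) = mod1 (f (iter n f x) + h)).
    rewrite IH by lra. apply Hstep. lra.
Qed.

Lemma iter_left_translation n x : in01 x -> left_translation (iter n f) x (iter n tau x).
Proof.
  intros Hx. induction n as [| n [d [Hd IH]]].
  - exists 1. split; [lra | reflexivity].
  - assert (Htn : in01 (iter n tau x))
      by exact (iter_preserves in01 tau n x (fun u Hu => proj1 (tau_left u Hu)) Hx).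
    destruct (proj2 (tau_left _ Htn)) as [e [He Hstep]].
    exists (Rmin d e). split; [apply Rmin_pos; lra |].
    intros h Hh. pose proof (Rmin_l d e). pose proof (Rmin_r d e).
    change (f (iter n f (mod1 (x - h))) = mod1 (tau (iter n tau x) - h)).
    rewrite IH by lra. apply Hstep. lra.
Qed.

Lemma iter_continuous_iff n x : in01 x ->
  (circle_continuous_at (iter n f) x <-> iter n f x = iter n tau x).
Proof.
  intros Hx.
  rewrite (continuous_iff_no_jump (iter n f) x (iter n tau x)).
  - split; intros; congruence.
  - exact Hx.
  - exact (iter_preserves in01 f n x f_in01 Hx).
  - exact (iter_preserves in01 tau n x (fun u Hu => proj1 (tau_left u Hu)) Hx).
  - apply iter_right_translation, Hx.
  - apply iter_left_translation, Hx.
Qed.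

Lemma disc_count_iter n m :
  disc_count (iter n f) m <-> list_counts (disagree in01 f tau n) m.
Proof.
  assert (Hpt : forall x,
    in01 x /\ ~ circle_continuous_at (iter n f) x <-> disagree in01 f tau n x).
  { intros x. unfold disagree. split; intros [Hx Hjump]; split; try exact Hx;
      rewrite (iter_continuous_iff n x Hx) in *; exact Hjump. }
  unfold disc_count, list_counts.
  split; intros [l [Hnd [Hlen Hl]]]; exists l; split; try exact Hnd; split; try exact Hlen;
    intros x; rewrite Hl; [exact (Hpt x) | symmetry; exact (Hpt x)].
Qed.

End Iterates.

Theorem lemma3p3 (f : R -> R) :
  IET f ->
  infinite_order f ->
  (exists B : nat, forall n : nat, exists m : nat,
      disc_count (iter n f) m /\ (m <= B)%nat) ->
  exists N : nat, (1 <= N)%nat /\ exists c : nat,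
    forall n : nat, (1 <= n)%nat -> disc_count (iter (n * N) f) c.
Proof.
  intros [[Hf [Hinj Honto]] [pts [ts Hpw]]] _ [B HB].
  destruct (piecewise_left_limit f pts ts Hpw) as [tau Htau].
  pose proof (piecewise_right_translation f pts ts Hpw) as Hright.
  assert (Hleft : forall u, in01 u -> in01 (tau u) /\ left_translation f u (tau u)).
  { intros u Hu. destruct (Htau u Hu) as [Hin [Hl _]]. split; assumption. }
  pose proof (disc_count_iter f tau Hf Hright Hleft) as Hcount.
  assert (Hbreaks : forall u, break in01 f tau u -> In u pts).
  { intros u [Hu Hjump]. exact (proj2 (proj2 (Htau u Hu)) Hjump). }
  assert (Hbounded : forall n, exists m, list_counts (disagree in01 f tau n) m /\ (m <= B)%nat).
  { intros n. destruct (HB n) as [m [Hm HmB]]. exists m. split; [apply Hcount, Hm | exact HmB]. }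
  destruct (disagree_eventually_equinumerous in01 f tau pts Hf Hinj Honto Hbreaks B Hbounded)
    as [N [HN Hbij]].
  exists N. split; [exact HN |].
  destruct (HB N) as [c [Hc _]]. exists c. intros n Hn.
  destruct (Hbij n Hn) as [phi Hphi].
  apply Hcount, (list_counts_bijective _ _ phi c Hphi), Hcount, Hc.
Qed.
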